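(* Let $X$ be a $d$-uniform simplicial complex, $k\le d$, and $f:X(k)\to[0,1]$ satisfy, for all $t>0$, $\Pr_{X(k)}[f-\mathbb{E}[f]>t]\le up(t)$ and $\Pr_{X(k)}[f-\mathbb{E}[f]<-t]\le low(t)$ for some functions $up,low:\mathbb{R}_+\to[0,1]$. Then the $d$-lift $U_{k,d}f:X(d)\to\mathbb{R}$ satisfies, for all $t>0$, \[\Pr_{X(d)}[U_{k,d}f-\mathbb{E}[f]>t]\le up(\tfrac t2)\left(1-\pi_{low}^{d,k,f}(\tfrac t2)\right)^{-1},\qquad \Pr_{X(d)}[U_{k,d}f-\mathbb{E}[f]<-t]\le low(\tfrac t2)\left(1-\pi_{up}^{d,k,f}(\tfrac t2)\right)^{-1}.\]
   Context: $X$ is a $d$-uniform simplicial complex (downward-closed set family with maximal sets of size $d$, $X(j)$ its faces of size $j$) with a distribution $\pi_d$ on $X(d)$, inducing $\pi_j$ on $X(j)$ by uniform subsampling; probabilities over $X(j)$ are with respect to $\pi_j$. The lift is $U_{k,d}f(s)=\mathbb{E}_{r\subseteq s}[f(r)]$ over uniformly random $k$-subsets $r$ of $s\in X(d)$. Define $\pi_{up}^{d,k,f}(t)=\max_{s\in X(d)}\Pr_{r\subseteq s}[f(r)-\mathbb{E}_{r\subseteq s}[f]>t]$ and $\pi_{low}^{d,k,f}(t)=\max_{s\in X(d)}\Pr_{r\subseteq s}[f(r)-\mathbb{E}_{r\subseteq s}[f]<-t]$, with $r$ a uniformly random $k$-subset of $s$. *)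

From mathcomp Require Import all_boot all_order all_algebra.
Set Implicit Arguments. Unset Strict Implicit. Unset Printing Implicit Defensive.
Import Order.TTheory GRing.Theory Num.Theory.
Local Open Scope ring_scope.

Section SC.
Variables (V : finType) (R : realFieldType).

Definition d_uniform_complex (X : {set {set V}}) (d : nat) : Prop :=
  (forall s r : {set V}, s \in X -> r \subset s -> r \in X) /\
  (forall s, s \in X -> (#|s| <= d)%N /\ exists2 s', s' \in X & (s \subset s') && (#|s'| == d)).

Definition faces (X : {set {set V}}) (j : nat) : {set {set V}} :=
  [set s in X | #|s| == j].

Definition is_distr (X : {set {set V}}) (d : nat) (pid : {set V} -> R) : Prop :=
  (forall s, 0 <= pid s) /\ (forall s, s \notin faces X d -> pid s = 0) /\
  \sum_(s in faces X d) pid s = 1.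

(* induced distribution on X(j): draw s ~ pi_d, then a uniform j-subset of s *)
Definition pi_ind (X : {set {set V}}) (d : nat) (pid : {set V} -> R) (j : nat)
  (r : {set V}) : R :=
  \sum_(s in faces X d | r \subset s) pid s / ('C(d, j))%:R.

Definition PrX (X : {set {set V}}) (d : nat) (pid : {set V} -> R) (j : nat)
  (P : pred {set V}) : R :=
  \sum_(r in faces X j | P r) pi_ind X d pid j r.

Definition EX (X : {set {set V}}) (d : nat) (pid : {set V} -> R) (k : nat)
  (f : {set V} -> R) : R :=
  \sum_(r in faces X k) pi_ind X d pid k r * f r.

Definition ksubsets (s : {set V}) (k : nat) : {set {set V}} :=
  [set r : {set V} | (r \subset s) && (#|r| == k)].

Definition ulift (k : nat) (f : {set V} -> R) (s : {set V}) : R :=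
  (\sum_(r in ksubsets s k) f r) / (#|ksubsets s k|)%:R.

Definition Pr_sub (s : {set V}) (k : nat) (P : pred {set V}) : R :=
  (#|[set r in ksubsets s k | P r]|)%:R / (#|ksubsets s k|)%:R.

Definition pi_up (X : {set {set V}}) (d k : nat) (f : {set V} -> R) (t : R) : R :=
  \big[Num.max/0]_(s in faces X d)
     Pr_sub s k (fun r => f r - ulift k f s > t).

Definition pi_low (X : {set {set V}}) (d k : nat) (f : {set V} -> R) (t : R) : R :=
  \big[Num.max/0]_(s in faces X d)
     Pr_sub s k (fun r => f r - ulift k f s < - t).

End SC.

From mathcomp Require Import all_boot all_order all_algebra.
From mathcomp Require Import lra.
Set Implicit Arguments. Unset Strict Implicit. Unset Printing Implicit Defensive.
Import Order.TTheory GRing.Theory Num.Theory.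
Local Open Scope ring_scope.

(* Drawing r from X(k) is the same as drawing s from X(d) and then a uniform
   k-subset r of s.  If U f s - E f > t, every r in s with f r - U f s >= -t/2
   has f r - E f > t/2; the remaining r have conditional probability at most
   pi_low(t/2).  Hence Pr[U f - E f > t] (1 - pi_low(t/2)) <= Pr[f - E f > t/2]
   <= up(t/2), and symmetrically for the lower tail. *)

Section LiftTails.
Variables (V : finType) (R : realFieldType).
Implicit Types (X : {set {set V}}) (d k : nat) (pid : {set V} -> R) (s r : {set V})
  (P Q : pred {set V}).

Lemma card_ksubsets X d k s : s \in faces X d -> #|ksubsets s k| = 'C(d, k).
Proof. by rewrite inE => /andP[_ /eqP <-]; rewrite cards_draws. Qed.

Lemma Pr_sub_ge0 s k P : 0 <= Pr_sub R s k P.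
Proof. by rewrite divr_ge0 ?ler0n. Qed.

Lemma Pr_sub_le s k P Q :
  {in ksubsets s k, subpred P Q} -> Pr_sub R s k P <= Pr_sub R s k Q.
Proof.
move=> PQ; rewrite ler_wpM2r ?invr_ge0 ?ler0n // ler_nat.
apply/subset_leq_card/subsetP => r; rewrite !inE => /andP[rs Pr].
by rewrite rs PQ // inE.
Qed.

Lemma Pr_subC s k P :
  (0 < #|ksubsets s k|)%N -> Pr_sub R s k (predC P) = 1 - Pr_sub R s k P.
Proof.
move=> ks_gt0; apply/eqP; rewrite eq_sym subr_eq addrC /Pr_sub -mulrDl -natrD.
rewrite [X in X%:R / _](_ : _ = #|ksubsets s k|) ?divff ?pnatr_eq0 -?lt0n //.
rewrite -(cardsID [set r | P r] (ksubsets s k)); congr (_ + _)%N;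
  by apply: eq_card => r; rewrite !inE andbC.
Qed.

Lemma PrX_top X d pid P :
  PrX X d pid d P = \sum_(s in faces X d | P s) pid s.
Proof.
apply: eq_bigr => r /andP[rX _]; rewrite /pi_ind binn.
rewrite (eq_bigl (pred1 r)) ?big_pred1_eq ?divr1 // => s /=.
have [-> | sr] := eqVneq s r; first by rewrite rX subxx.
apply/negbTE/andP => -[sX rs]; move: sr; rewrite eq_sym eqEcard rs /=.
by move: sX rX; rewrite !inE => /andP[_ /eqP ->] /andP[_ /eqP ->]; rewrite leqnn.
Qed.

Lemma PrX_mixture X d pid k P :
  (forall s r, s \in X -> r \subset s -> r \in X) ->
  PrX X d pid k P = \sum_(s in faces X d) pid s * Pr_sub R s k P.
Proof.
move=> downX; rewrite /PrX /pi_ind.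
under eq_bigr do rewrite big_mkcondr.
rewrite exchange_big /=; apply: eq_bigr => s sX; rewrite -big_mkcondr /=.
rewrite (eq_bigl [in [set r in ksubsets s k | P r]]); last first.
  move=> r /=; rewrite !inE; case rs: (r \subset s); rewrite ?andbF //=.
  have -> // : r \in X by apply: (downX s) rs; case/setIdP: sX.
  by rewrite andbC.
by rewrite sumr_const /Pr_sub (card_ksubsets k sX) -[_ *+ _]mulr_natr mulrAC -mulrA.
Qed.

Lemma PrX_top_mulB_le X d k pid (G : pred {set V})
    (Bad : {set V} -> pred {set V}) Q a :
  (forall s r, s \in X -> r \subset s -> r \in X) ->
  (forall s, 0 <= pid s) -> (k <= d)%N ->
  (forall s, s \in faces X d -> Pr_sub R s k (Bad s) <= a) ->
  (forall s r, s \in faces X d -> G s -> r \in ksubsets s k -> ~~ Bad s r -> Q r) ->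
  PrX X d pid d G * (1 - a) <= PrX X d pid k Q.
Proof.
move=> downX pid_ge0 kd Bad_le GQ.
rewrite PrX_top PrX_mixture // mulr_suml.
have good_le s : s \in faces X d -> G s -> 1 - a <= Pr_sub R s k Q.
  move=> sX Gs; have ks_gt0 : (0 < #|ksubsets s k|)%N.
    by rewrite (card_ksubsets k sX) bin_gt0.
  apply: le_trans (lerB (lexx 1) (Bad_le s sX)) _.
  rewrite -Pr_subC //; apply: Pr_sub_le => r rs; exact: GQ.
apply: le_trans (_ : _ <= \sum_(s in faces X d | G s) pid s * Pr_sub R s k Q) _.
  by apply: ler_sum => s /andP[sX Gs]; rewrite ler_wpM2l ?good_le.
rewrite [leRHS](bigID G) /= lerDl; apply: sumr_ge0 => s _.
by rewrite mulr_ge0 ?Pr_sub_ge0.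
Qed.

End LiftTails.

Theorem mainTheorem10 (V : finType) (R : realFieldType)
  (X : {set {set V}}) (d k : nat) (pid : {set V} -> R)
  (f : {set V} -> R) (up low : R -> R) :
  d_uniform_complex X d ->
  is_distr X d pid ->
  (k <= d)%N ->
  (forall r, r \in faces X k -> 0 <= f r <= 1) ->
  (forall t, 0 < t -> 0 <= up t <= 1) ->
  (forall t, 0 < t -> 0 <= low t <= 1) ->
  (forall t, 0 < t ->
     PrX X d pid k (fun r => f r - EX X d pid k f > t) <= up t) ->
  (forall t, 0 < t ->
     PrX X d pid k (fun r => f r - EX X d pid k f < - t) <= low t) ->
  forall t, 0 < t ->
    (pi_low X d k f (t / 2) < 1 ->
       PrX X d pid d (fun s => ulift k f s - EX X d pid k f > t)
         <= up (t / 2) / (1 - pi_low X d k f (t / 2))) /\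
    (pi_up X d k f (t / 2) < 1 ->
       PrX X d pid d (fun s => ulift k f s - EX X d pid k f < - t)
         <= low (t / 2) / (1 - pi_up X d k f (t / 2))).
Proof.
move=> [downX _] [pid_ge0 _] kd _ _ _ up_tail low_tail t t_gt0.
have t2_gt0 : 0 < t / 2 by rewrite divr_gt0.
split=> pi_lt1; rewrite ler_pdivlMr ?subr_gt0 //.
- apply: le_trans (up_tail _ t2_gt0).
  apply: (PrX_top_mulB_le (Bad := fun s r => f r - ulift k f s < - (t / 2))) => //.
    by move=> s sX; apply: le_bigmax_cond.
  by move=> s r _ /= Gs _; rewrite -leNgt => ?; lra.
- apply: le_trans (low_tail _ t2_gt0).
  apply: (PrX_top_mulB_le (Bad := fun s r => f r - ulift k f s > t / 2)) => //.
    by move=> s sX; apply: le_bigmax_cond.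
  by move=> s r _ /= Gs _; rewrite -leNgt => ?; lra.
Qed.
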